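(* Let $F$ and $G$ be simple graphs. Then \[\hom(F,G^\circ)=\sum_{L\subseteq E(F)}\hom(F\oslash L,G).\]
   Context: Graphs are finite, undirected, without multiple edges, possibly with loops; simple means without loops. A homomorphism $F\to G$ is a vertex map sending edges to edges and looped vertices to looped vertices (so an edge may be mapped onto a loop); $\hom(F,G)$ counts them. $G^\circ$ is obtained from $G$ by adding a loop at every vertex. For a simple graph $F$ and $L\subseteq E(F)$, $v\sim_L w$ iff $v,w$ lie in the same connected component of the graph $(V(F),L)$; $[v]_L$ denotes the class of $v$. The contraction quotient $F\oslash L$ is the graph (possibly with loops) whose vertices are the classes $[v]_L$, with an edge (or loop, if the classes coincide) between $[v]_L$ and $[w]_L$ iff there is an edge $xy\in E(F)\setminus L$ with $x\sim_L v$ and $y\sim_L w$. *)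

From mathcomp Require Import all_boot.
Set Implicit Arguments. Unset Strict Implicit. Unset Printing Implicit Defensive.

(* A finite graph, possibly with loops: a vertex finType and an adjacency
   relation; a loop at x is [adj x x]. *)
Record graph := Graph { vert : finType; adj : rel vert }.
Arguments adj : clear implicits.

Definition simple (G : graph) : Prop :=
  symmetric (adj G) /\ irreflexive (adj G).

Definition is_hom (F G : graph) (f : vert F -> vert G) : bool :=
  [forall x, forall y, adj F x y ==> adj G (f x) (f y)].

Definition hom (F G : graph) : nat :=
  #|[set f : {ffun vert F -> vert G} | @is_hom F G f]|.

Definition loopify (G : graph) : graph :=
  @Graph (vert G) (fun x y => (x == y) || adj G x y).

Definition edges (F : graph) : {set {set vert F}} :=
  [set S : {set vert F} | [exists x, exists y, adj F x y && (S == [set x; y])]].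

Section Contraction.
Variables (F : graph) (L : {set {set vert F}}).

Definition Lrel : rel (vert F) := fun x y => [set x; y] \in L.

Definition Lclass (v : vert F) : {set vert F} := [set w | connect Lrel v w].

Definition Lclasses : {set {set vert F}} := [set Lclass v | v : vert F].

Definition cvert : finType := {C : {set vert F} | C \in Lclasses}.

Definition cadj : rel cvert := fun C D =>
  [exists x, exists y,
     [&& x \in val C, y \in val D, adj F x y & [set x; y] \notin L]].

Definition contract : graph := @Graph cvert cadj.
End Contraction.

From mathcomp Require Import all_boot.

Set Implicit Arguments.
Unset Strict Implicit.
Unset Printing Implicit Defensive.

(* A homomorphism f : F -> G° determines the set L of edges of F whose two
   ends have the same image.  Then f is constant on the classes [v]_L, and
   every remaining edge is mapped onto an edge of G, so f factors uniquely
   through a homomorphism F ⊘ L -> G.  Conversely, as G has no loops, composing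
   a homomorphism F ⊘ L -> G with the quotient map yields a homomorphism into
   G° collapsing exactly the edges in L.  Grouping the homomorphisms into G° by
   L gives the sum. *)

Lemma homP (F G : graph) (f : vert F -> vert G) :
  reflect (forall x y, adj F x y -> adj G (f x) (f y)) (is_hom f).
Proof.
apply: (iffP forallP) => [hf x y|hf x].
  by move/forallP/(_ y)/implyP: (hf x).
by apply/forallP => y; apply/implyP/hf.
Qed.

Lemma edgesP (F : graph) (S : {set vert F}) :
  reflect (exists x y, adj F x y /\ S = [set x; y]) (S \in edges F).
Proof.
rewrite inE; apply: (iffP existsP) => [[x /existsP[y /andP[xy /eqP->]]]|].
  by exists x, y.
by move=> [x [y [xy ->]]]; exists x; apply/existsP; exists y; rewrite xy eqxx.
Qed.

Lemma connect_fun_eq (T : finType) (U : Type) (e : rel T) (f : T -> U) :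
  (forall x y, e x y -> f x = f y) -> forall x y, connect e x y -> f x = f y.
Proof.
move=> fe x y /connectP[p xp ->]; elim: p x xp => [|z p IHp] x //= /andP[xz zp].
by rewrite (fe _ _ xz); apply: IHp.
Qed.

Lemma forall_set2_eq (T : finType) (U : eqType) (f : T -> U) (x y : T) :
  [forall u in [set x; y], forall v in [set x; y], f u == f v] = (f x == f y).
Proof.
apply/forall_inP/eqP => [fxy|fxy u].
  by apply/eqP; apply: (forall_inP (fxy x (set21 x y))); rewrite set22.
by rewrite !inE => /orP[]/eqP->; apply/forall_inP => v;
  rewrite !inE => /orP[]/eqP->; rewrite ?fxy.
Qed.

Section Contraction.
Variables (F : graph) (L : {set {set vert F}}).

Lemma Lrel_sym : symmetric (Lrel L).
Proof. by move=> x y; rewrite /Lrel setUC. Qed.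

Lemma Lconnect_sym : connect_sym (Lrel L).
Proof. exact: sym_connect_sym Lrel_sym. Qed.

Lemma Lclass_in (x : vert F) : Lclass L x \in Lclasses L.
Proof. exact: imset_f. Qed.

Definition cproj (x : vert F) : cvert L := exist _ (Lclass L x) (Lclass_in x).

Lemma cproj_eq (x y : vert F) : (cproj x == cproj y) = connect (Lrel L) x y.
Proof.
apply/eqP/idP => [exy|xy].
  by move/setP/(_ y): (congr1 val exy); rewrite !inE connect0.
by apply: val_inj; apply/setP => z; rewrite !inE (same_connect Lconnect_sym xy).
Qed.

Lemma cproj_surj (C : cvert L) : exists x, C == cproj x.
Proof.
by case: C => C CL; have /imsetP[x _ Cx] := CL; exists x; apply/eqP/val_inj.
Qed.

Lemma mem_cproj (C : cvert L) (x : vert F) : (x \in val C) = (C == cproj x).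
Proof. by have [v /eqP->] := cproj_surj C; rewrite inE cproj_eq. Qed.

Definition crepr (C : cvert L) : vert F := xchoose (cproj_surj C).

Lemma creprK : cancel crepr cproj.
Proof. by move=> C; rewrite -(eqP (xchooseP (cproj_surj C))). Qed.

Lemma cadjP (C D : cvert L) :
  reflect (exists x y, [/\ adj F x y, [set x; y] \notin L, C = cproj x & D = cproj y])
          (cadj C D).
Proof.
apply: (iffP existsP) => [[x /existsP[y /and4P[xC yD xy xyL]]]|[x [y [xy xyL -> ->]]]].
  by rewrite !mem_cproj in xC yD; exists x, y; split => //; apply/eqP.
by exists x; apply/existsP; exists y; rewrite !mem_cproj !eqxx xy xyL.
Qed.

Lemma crepr_cproj_eq (T : Type) (f : vert F -> T) :
  (forall x y, [set x; y] \in L -> f x = f y) -> forall x, f (crepr (cproj x)) = f x.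
Proof.
move=> fL x; apply: (@connect_fun_eq _ _ (Lrel L) _ fL).
by rewrite -cproj_eq creprK.
Qed.

End Contraction.

Section Collapse.
Variables (F G : graph).

Definition collapsed (f : vert F -> vert G) : {set {set vert F}} :=
  [set S in edges F | [forall x in S, forall y in S, f x == f y]].

Lemma collapsed_sub (f : vert F -> vert G) : collapsed f \subset edges F.
Proof. by apply/subsetP => S; rewrite inE => /andP[]. Qed.

Lemma mem_collapsed (f : vert F -> vert G) (x y : vert F) :
  adj F x y -> ([set x; y] \in collapsed f) = (f x == f y).
Proof.
move=> xy; rewrite inE forall_set2_eq (_ : _ \in edges F) //.
by apply/edgesP; exists x, y.
Qed.

Definition precomp (L : {set {set vert F}}) (g : {ffun cvert L -> vert G}) :
  {ffun vert F -> vert G} := [ffun x => g (cproj L x)].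

Lemma precomp_inj (L : {set {set vert F}}) : injective (@precomp L).
Proof.
move=> g1 g2 /ffunP g12; apply/ffunP => C.
by rewrite -(creprK C); have := g12 (crepr C); rewrite !ffunE.
Qed.

Lemma precomp_is_hom (L : {set {set vert F}}) (g : {ffun cvert L -> vert G}) :
  is_hom (F := contract L) g -> is_hom (G := loopify G) (precomp g).
Proof.
move=> /homP hg; apply/homP => x y xy /=; rewrite !ffunE.
have [xyL|xyL] := boolP ([set x; y] \in L).
  by rewrite (eqP (_ : cproj L x == cproj L y)) ?eqxx // cproj_eq connect1.
by rewrite hg ?orbT //; apply/cadjP; exists x, y.
Qed.

Lemma collapsed_precomp (L : {set {set vert F}}) (g : {ffun cvert L -> vert G}) :
  irreflexive (adj G) -> L \subset edges F -> is_hom (F := contract L) g ->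
  collapsed (precomp g) = L.
Proof.
move=> irrG /subsetP LF /homP hg; apply/setP => S.
apply/idP/idP => [SC|SL]; last first.
  have /edgesP[x [y [xy SE]]] := LF _ SL.
  move: SL; rewrite SE mem_collapsed // !ffunE => xyL.
  by rewrite (eqP (_ : cproj L x == cproj L y)) // cproj_eq connect1.
have /edgesP[x [y [xy SE]]] := subsetP (collapsed_sub _) _ SC.
move: SC; rewrite SE mem_collapsed // !ffunE; apply: contraTT => xyL.
suff /hg : cadj (cproj L x) (cproj L y) by apply: contraTneq => ->; rewrite irrG.
by apply/cadjP; exists x, y.
Qed.

Lemma hom_factor (f : {ffun vert F -> vert G}) :
  is_hom (G := loopify G) f ->
  exists2 g : {ffun cvert (collapsed f) -> vert G},
    is_hom (F := contract (collapsed f)) g & f = precomp g.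
Proof.
move=> /homP hf; set L := collapsed f.
have fL x y : [set x; y] \in L -> f x = f y.
  by rewrite inE forall_set2_eq => /andP[_ /eqP].
exists [ffun C => f (crepr C)].
  apply/homP => C D /cadjP[x [y [xy xyL -> ->]]]; rewrite !ffunE !crepr_cproj_eq //.
  by case/orP: (hf x y xy) => // fxy; rewrite mem_collapsed // fxy in xyL.
by apply/ffunP => x; rewrite !ffunE crepr_cproj_eq.
Qed.

Lemma card_collapsed_eq (L : {set {set vert F}}) :
  irreflexive (adj G) -> L \subset edges F ->
  #|[set f : {ffun vert F -> vert G} | is_hom (G := loopify G) f & collapsed f == L]|
    = hom (contract L) G.
Proof.
move=> irrG LF; rewrite /hom -(card_imset _ (@precomp_inj L)); apply: eq_card => f.
rewrite inE; apply/andP/imsetP => [[hf /eqP CL]|[g]]; last first.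
  rewrite inE => hg ->; split; first exact: precomp_is_hom.
  by rewrite collapsed_precomp.
subst L; have [g hg fE] := hom_factor hf.
by exists g; rewrite ?inE.
Qed.

End Collapse.

Theorem theorem10 (F G : graph) (hF : simple F) (hG : simple G) :
  hom F (loopify G) = \sum_(L : {set {set vert F}} | L \subset edges F) hom (contract L) G.
Proof.
have [_ irrG] := hG.
rewrite {1}/hom -sum1_card.
rewrite (partition_big (fun f : {ffun vert F -> vert G} => collapsed f)
                       (fun L => L \subset edges F)) /=.
  apply: eq_bigr => L LF; rewrite sum1_card -card_collapsed_eq //.
  by apply: eq_card => f; rewrite [in LHS]unfold_in /= !inE.
by move=> f _; apply: collapsed_sub.
Qed.
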